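(* For every positive integer $t$, \[ L_{\mathcal{T}_{1/2,\,1/6}}(t) - L_{\mathcal{T}_{1/3,\,1/4}}(t) = \begin{cases} d(t) - 1, & t \equiv 4 \pmod{12},\\ d(t), & \text{otherwise,}\end{cases} \] where $d(t) = \lceil t/12 \rceil$ if $t$ is even and $d(t) = 0$ if $t$ is odd.
   Context: For $u,v>0$, $\mathcal{T}_{u,v}$ denotes the closed triangle with vertices $(0,0)$, $(u,0)$, $(0,v)$, and its Ehrhart function is $L_{\mathcal{T}_{u,v}}(t) = \#\left(\mathbb{Z}^2 \cap \mathcal{T}_{tu,tv}\right)$ for positive integers $t$. *)

From mathcomp Require Import all_boot all_order all_algebra.
Set Implicit Arguments. Unset Strict Implicit. Unset Printing Implicit Defensive.
Import Order.TTheory GRing.Theory Num.Theory.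
Local Open Scope ring_scope.

Definition in_triangle (u v : rat) (x y : int) : bool :=
  [&& 0 <= x, 0 <= y & (x%:~R / u + y%:~R / v <= (1 : rat))].

(* Box bound: any lattice point of T_{tu,tv} has coordinates <= t*u <= t*|numq u|
   (for u > 0) and similarly for v; so counting over the box is exact. *)
Definition box_bound (t : nat) (u : rat) : nat := (t * `|numq u|%N).+1.

Definition ehrhart_triangle (u v : rat) (t : nat) : nat :=
  #|[set p : 'I_(box_bound t u) * 'I_(box_bound t v) |
      in_triangle (t%:R * u) (t%:R * v) (nat_of_ord p.1)%:Z (nat_of_ord p.2)%:Z]|.

Definition dfun (t : nat) : nat := if odd t then 0%N else ((t + 11) %/ 12)%N.

From mathcomp Require Import all_boot all_order all_algebra ring zify.
Import Order.TTheory GRing.Theory Num.Theory.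

(* For positive integers a, b the dilate T_{t/a, t/b} contains exactly the
   lattice points (x, y) in N^2 with a x + b y <= t.  Counting them row by
   row gives the nat-valued function  tri_count a b t,  so the two Ehrhart
   functions of the theorem are  tri_count 2 6  and  tri_count 3 4.

   The counting function satisfies the shift recurrence
     tri_count a b (t + b) = tri_count a b t + (t + b) %/ a + 1
   (the bottom row y = 0 is new, the other rows are those of the level t).
   Iterating it over one period 12 = 2 * 6 = 3 * 4 shows that
   tri_count 2 6 t - tri_count 3 4 t - dfun t  is 12-periodic, so the
   identity reduces to the twelve residues t < 12, checked by computation. *)

Definition rows_count (a b t N : nat) : nat :=
  \sum_(0 <= y < N) (b * y <= t) * ((t - b * y) %/ a).+1.

(* All rows above y = t are empty, so N = t + 1 rows count the whole triangle. *)
Definition tri_count (a b t : nat) : nat := rows_count a b t t.+1.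

Lemma rows_count_ext (a b t N : nat) :
  0 < b -> t < N -> rows_count a b t N = tri_count a b t.
Proof.
move=> b_gt0 lt_t_N; rewrite /tri_count /rows_count (big_cat_nat _ (n := t.+1)) //=.
rewrite [X in _ + X]big1_seq ?addn0 // => y /andP[_].
by rewrite mem_index_iota => /andP[lt_t_y _]; rewrite leqNgt (leq_trans lt_t_y) ?leq_pmull.
Qed.

(* Shift recurrence: raising the level by b adds the new bottom row y = 0
   and moves every old row up by one. *)
Lemma tri_count_shift (a b t : nat) :
  0 < b -> tri_count a b (t + b) = tri_count a b t + ((t + b) %/ a).+1.
Proof.
move=> b_gt0; have lt_t_tb : t < t + b by rewrite -{1}[t]addn0 ltn_add2l.
rewrite /tri_count /rows_count big_nat_recl //= muln0 subn0 mul1n addnC.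
congr (_ + _); rewrite -[RHS]/(tri_count a b t) -(rows_count_ext a _ _ _ b_gt0 lt_t_tb).
by apply: eq_bigr => y _; rewrite [b * y.+1]mulnS [b + _]addnC leq_add2r subnDr.
Qed.

Definition count26 (t : nat) : nat := tri_count 2 6 t.
Definition count34 (t : nat) : nat := tri_count 3 4 t.

Lemma count26_period (t : nat) :
  count26 (t + 12) = count26 t + ((t + 6) %/ 2).+1 + ((t + 12) %/ 2).+1.
Proof. by rewrite /count26 -[12]/(6 + 6) addnA !tri_count_shift. Qed.

Lemma count34_period (t : nat) :
  count34 (t + 12) = count34 t + ((t + 4) %/ 3).+1 + ((t + 8) %/ 3).+1 + ((t + 12) %/ 3).+1.
Proof. by rewrite /count34 -[12]/(4 + 4 + 4) !addnA !tri_count_shift. Qed.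

Lemma dfun_period (t : nat) : dfun (t + 12) = dfun t + ~~ odd t.
Proof. by rewrite /dfun oddD /=; case: (odd t) => /=; lia. Qed.

(* Over one period both sides of the identity grow by the same amount:
   the left side by 2 floor(t/2) + 11 = t + 10 + [t even]; on the right the
   three quotients by 3 are, by Hermite's identity,
   floor(t/3) + floor((t+1)/3) + floor((t+2)/3) + 7 = t + 7. *)
Lemma period_increments (t : nat) :
  ((t + 6) %/ 2).+1 + ((t + 12) %/ 2).+1
  = ((t + 4) %/ 3).+1 + ((t + 8) %/ 3).+1 + ((t + 12) %/ 3).+1 + ~~ odd t.
Proof. by have := modn2 t; case: (odd t) => /=; lia. Qed.

Lemma lattice_identity_small (t : nat) :
  t < 12 -> count26 t + (t %% 12 == 4) = count34 t + dfun t.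
Proof.
have checked : all (fun t => count26 t + (t %% 12 == 4) == count34 t + dfun t) (iota 0 12).
  by rewrite /count26 /count34 /tri_count /rows_count unlock.
by move=> lt_t12; apply/eqP/(allP checked); rewrite mem_iota.
Qed.

Lemma lattice_identity (t : nat) : count26 t + (t %% 12 == 4) = count34 t + dfun t.
Proof.
elim/ltn_ind: t => t IH; have [/lattice_identity_small //|le12t] := ltnP t 12.
have /IH IHs : t - 12 < t by rewrite ltn_subrL (leq_trans _ le12t).
have -> : t = (t - 12) + 12 by rewrite subnK.
rewrite count26_period count34_period dfun_period modnDr.
have := period_increments (t - 12); lia.
Qed.

Local Open Scope ring_scope.

(* 1/a is already in lowest terms, so the box bound of the definition is t + 1. *)
Lemma box_bound_unit_fraction (t a : nat) : (0 < a)%N -> box_bound t (1 / a%:R) = t.+1.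
Proof.
move=> a_gt0; rewrite /box_bound.
have := @coprimeq_num 1 a%:Z; rewrite /= coprime1n => /(_ isT).
by rewrite mulr1 gtr0_sg ?ltz_nat // mul1r => ->; rewrite muln1.
Qed.

Lemma in_triangle_unit_fractions (a b t x y : nat) : (0 < a)%N -> (0 < b)%N -> (0 < t)%N ->
  in_triangle (t%:R * (1 / a%:R)) (t%:R * (1 / b%:R)) x%:Z y%:Z = (a * x + b * y <= t)%N.
Proof.
move=> a_gt0 b_gt0 t_gt0; rewrite /in_triangle /=.
have nz (n : nat) : (0 < n)%N -> (n%:R : rat) != 0 by rewrite pnatr_eq0 -lt0n.
have -> : x%:~R / (t%:R * (1 / a%:R)) + y%:~R / (t%:R * (1 / b%:R))
          = (a * x + b * y)%:R / t%:R :> rat.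
  by rewrite natrD !natrM /=; field; rewrite !nz.
by rewrite ler_pdivrMr ?ltr0n // mul1r ler_nat.
Qed.

Lemma card_pairs_sum (n m : nat) (P : nat -> nat -> bool) :
  #|[set p : 'I_n * 'I_m | P p.1 p.2]| = (\sum_(0 <= y < m) \sum_(0 <= x < n) P x y)%N.
Proof.
rewrite -sum1_card big_mkcond /=.
rewrite (eq_bigr (fun p : 'I_n * 'I_m => (P p.1 p.2 : nat))); last first.
  by move=> p _; rewrite inE; case: (P _ _).
rewrite -(pair_bigA _ (fun (i : 'I_n) (j : 'I_m) => (P i j : nat))) /= exchange_big /=.
by rewrite big_mkord; apply: eq_bigr => y _; rewrite big_mkord.
Qed.

Lemma row_count (a c t N : nat) : (0 < a)%N ->
  (\sum_(0 <= x < N) (a * x + c <= t : nat) = (c <= t) * minn N ((t - c) %/ a).+1)%N.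
Proof.
move=> a_gt0; elim: N => [|N IH]; first by rewrite big_geq // min0n muln0.
rewrite big_nat_recr //= IH; have [le_ct|lt_tc] := leqP c t; last first.
  by rewrite leqNgt (leq_trans lt_tc) ?leq_addl.
have -> : (a * N + c <= t)%N = (N <= (t - c) %/ a)%N by rewrite leq_divRL // mulnC; lia.
by case: (leqP N ((t - c) %/ a)) => /=; lia.
Qed.

Lemma ehrhart_unit_fractions (a b t : nat) : (0 < a)%N -> (0 < b)%N -> (0 < t)%N ->
  ehrhart_triangle (1 / a%:R) (1 / b%:R) t = tri_count a b t.
Proof.
move=> a_gt0 b_gt0 t_gt0; rewrite /ehrhart_triangle !box_bound_unit_fraction //.
rewrite (card_pairs_sum _ _ (fun x y : nat =>
  in_triangle (t%:R * (1 / a%:R)) (t%:R * (1 / b%:R)) x%:Z y%:Z)).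
apply: eq_bigr => y _; rewrite (eq_bigr (fun x => a * x + b * y <= t : nat)%N); last first.
  by move=> x _; rewrite in_triangle_unit_fractions.
rewrite row_count //; case: leqP => //= le_byt; rewrite !mul1n.
by apply/minn_idPr; rewrite ltnS (leq_trans (leq_div _ _)) ?leq_subr.
Qed.

Theorem mainTheorem13 (t : nat) : (0 < t)%N ->
  ((ehrhart_triangle (1/2) (1/6) t)%:Z - (ehrhart_triangle (1/3) (1/4) t)%:Z
   = if (t %% 12 == 4)%N then (dfun t)%:Z - 1 else (dfun t)%:Z)%R.
Proof.
move=> t_gt0; rewrite !ehrhart_unit_fractions //.
have := lattice_identity t; rewrite /count26 /count34.
by case: (t %% 12 == 4)%N => /=; lia.
Qed.
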